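(* Let $N\ge2$, $\alpha,\beta>-1$, let $x_0<\dots<x_N$ be the JGL nodes with Lagrange basis $h_0,\dots,h_N$, and let $\mu\in(k-1,k)$ with $k\in\{1,2\}$. Suppose $Q_j^\mu\in\mathcal P_N$ satisfy: if $k=1$, for $1\le j\le N$, ${}^C D_-^\mu Q_j^\mu(x_i)=\delta_{ij}$ for $1\le i\le N$ and $Q_j^\mu(-1)=0$; if $k=2$, for $1\le j\le N-1$, ${}^C D_-^\mu Q_j^\mu(x_i)=\delta_{ij}$ for $1\le i\le N-1$ and $Q_j^\mu(\pm1)=0$. Let $\mathbf Q^{(\mu)}$ be the matrix with entries $\mathbf Q^{(\mu)}_{lj}=Q_j^\mu(x_l)$, $1\le l,j\le N+1-k$, and let ${}^C\mathbf D^{(\mu)}_{\rm in}$ be the matrix with entries $({}^C D_-^\mu h_j)(x_i)$, $1\le i,j\le N+1-k$. Then $$ \mathbf Q^{(\mu)}\,{}^C\mathbf D^{(\mu)}_{\rm in}={}^C\mathbf D^{(\mu)}_{\rm in}\,\mathbf Q^{(\mu)}=\mathbf I_{N+1-k}. $$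
   Context: For $\rho>0$, $(I_-^\rho u)(x)=\frac{1}{\Gamma(\rho)}\int_{-1}^x (x-y)^{\rho-1}u(y)\,dy$, $D^k=d^k/dx^k$, and for $\mu\in(k-1,k)$ the Caputo derivative is ${}^C D_-^\mu u=I_-^{k-\mu}(D^k u)$. The JGL nodes $x_0<\dots<x_N$ are the zeros of $(1-x^2)\frac{d}{dx}P_N^{(\alpha,\beta)}(x)$ (Jacobi polynomial, Szegő normalization), so $x_0=-1$, $x_N=1$; $h_j\in\mathcal P_N$ is the Lagrange basis polynomial with $h_j(x_i)=\delta_{ij}$. $\mathbf I_m$ is the $m\times m$ identity matrix. *)

From Stdlib Require Import Reals Lra Lia Arith.
Open Scope R_scope.

Fixpoint falling (r : R) (m : nat) : R :=
  match m with
  | O => 1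
  | S m' => falling r m' * (r - INR m')
  end.
Definition gbinom (r : R) (m : nat) : R := falling r m / INR (fact m).

(* Jacobi polynomial, Szego normalization (Szego (4.3.2)):
   P_n^{(a,b)}(t) = sum_{s=0}^n binom(n+a, n-s) binom(n+b, s) ((t-1)/2)^s ((t+1)/2)^(n-s) *)
Definition jacobiP (n : nat) (a b : R) (t : R) : R :=
  sum_f_R0 (fun s => gbinom (INR n + a) (n - s) * gbinom (INR n + b) s
                      * ((t - 1) / 2) ^ s * ((t + 1) / 2) ^ (n - s)) n.

Definition lagrange (x : nat -> R) (N j : nat) (t : R) : R :=
  prod_f_R0 (fun m => if Nat.eq_dec m j then 1 else (t - x m) / (x j - x m)) N.

Definition in_PN (N : nat) (u : R -> R) : Prop :=
  exists c : nat -> R, forall t, u t = sum_f_R0 (fun m => c m * t ^ m) N.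

Definition is_deriv (u g : R -> R) : Prop := forall y, derivable_pt_lim u y (g y).

Fixpoint is_nderiv (k : nat) (u g : R -> R) : Prop :=
  match k with
  | O => forall y, g y = u y
  | S k' => exists u1, is_deriv u u1 /\ is_nderiv k' u1 g
  end.

Definition riemann_int (f : R -> R) (a b I : R) : Prop :=
  exists pr : Riemann_integrable f a b, RiemannInt pr = I.

Definition is_Gamma (rho G : R) : Prop :=
  forall eps, 0 < eps -> exists delta M, 0 < delta /\
    forall a b, 0 < a < delta -> M < b ->
      exists I, riemann_int (fun t => Rpower t (rho - 1) * exp (- t)) a b I
                /\ Rabs (I - G) < eps.

(* v = (I_-^rho g)(x) = 1/Gamma(rho) int_{-1}^x (x-y)^(rho-1) g(y) dy,
   the integral being the (possibly improper at y = x) limit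
   lim_{b -> x^-} int_{-1}^b (x-y)^(rho-1) g(y) dy   (for x > -1). *)
Definition frac_int (rho : R) (g : R -> R) (x v : R) : Prop :=
  exists G L, is_Gamma rho G /\ v = L / G /\
    forall eps, 0 < eps -> exists delta, 0 < delta /\
      forall b, -1 <= b -> x - delta < b < x ->
        exists I, riemann_int (fun y => Rpower (x - y) (rho - 1) * g y) (-1) b I
                  /\ Rabs (I - L) < eps.

Definition caputo (mu : R) (k : nat) (u : R -> R) (x v : R) : Prop :=
  exists g, is_nderiv k u g /\ frac_int (INR k - mu) g x v.

Definition kdelta (i j : nat) : R := if Nat.eq_dec i j then 1 else 0.

From Stdlib Require Import Reals Lra Lia FunctionalExtensionality.
From mathcomp Require all_boot all_algebra Rstruct.
Open Scope R_scope.

(** Each Q_j vanishes at x_0 = -1 (and at x_N = 1 when k = 2), so Lagrange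
    interpolation at the JGL nodes writes it as a combination of the interior
    basis polynomials: Q_j = sum_l Q_j(x_l) h_l.  The Caputo derivative is
    linear and single-valued at every x > -1, so evaluating it at x_i gives
    delta_ij = sum_l D_in(i,l) Q_j(x_l), i.e. D_in Q = I.  A one-sided inverse
    of a square matrix is two-sided, whence also Q D_in = I. *)

Lemma in_PN_ext n p q : (forall t, p t = q t) -> in_PN n p -> in_PN n q.
Proof. intros E [c H]; exists c; intro t; rewrite <- E; apply H. Qed.

Lemma in_PN_lincomb n p q a b : in_PN n p -> in_PN n q ->
  in_PN n (fun t => a * p t + b * q t).
Proof.
  intros [c1 H1] [c2 H2]; exists (fun m => a * c1 m + b * c2 m); intro t.
  rewrite H1, H2, !scal_sum, <- sum_plus; apply sum_eq; intros; ring.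
Qed.

Lemma in_PN_S n p : in_PN n p -> in_PN (S n) p.
Proof.
  intros [c H]; exists (fun m => if Nat.eq_dec m (S n) then 0 else c m); intro t.
  rewrite H; cbn [sum_f_R0].
  destruct (Nat.eq_dec (S n) (S n)) as [_|]; [|congruence].
  rewrite Rmult_0_l, Rplus_0_r; apply sum_eq; intros i Hi.
  destruct (Nat.eq_dec i (S n)); [lia|reflexivity].
Qed.

Lemma in_PN_const n c : in_PN n (fun _ => c).
Proof.
  induction n as [|n IH]; [|now apply in_PN_S].
  exists (fun _ => c); intro t; simpl; ring.
Qed.

Lemma in_PN_mul_id n p : in_PN n p -> in_PN (S n) (fun t => t * p t).
Proof.
  intros [c H]; exists (fun m => match m with O => 0 | S m' => c m' end); intro t.
  rewrite H, (decomp_sum _ (S n)), scal_sum by lia; simpl; rewrite Rmult_0_l, Rplus_0_l.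
  apply sum_eq; intros; simpl; ring.
Qed.

Lemma in_PN_mul_linear n p a b : in_PN n p -> in_PN (S n) (fun t => p t * ((t - a) / b)).
Proof.
  intros H.
  apply (in_PN_ext (S n) (fun t => / b * (t * p t) + (- a / b) * p t)).
  - intros; unfold Rdiv; ring.
  - apply in_PN_lincomb; [apply in_PN_mul_id | apply in_PN_S]; exact H.
Qed.

Lemma in_PN_pow m n : (m <= n)%nat -> in_PN n (fun t => t ^ m).
Proof.
  revert n; induction m as [|m IH]; intros n Hn; [exact (in_PN_const n 1)|].
  destruct n as [|n]; [lia|].
  apply in_PN_mul_id, IH; lia.
Qed.

Lemma in_PN_sum n K (f : nat -> R -> R) : (forall m, (m <= K)%nat -> in_PN n (f m)) ->
  in_PN n (fun t => sum_f_R0 (fun m => f m t) K).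
Proof.
  induction K as [|K IH]; intros H; [apply H; lia|].
  apply (in_PN_ext n (fun t => 1 * sum_f_R0 (fun m => f m t) K + 1 * f (S K) t)).
  - intros; simpl; ring.
  - apply in_PN_lincomb; [apply IH; intros | ]; apply H; lia.
Qed.

(* [pow_sub_quot a t m] = t^(m-1) + a t^(m-2) + ... + a^(m-1) = (t^m - a^m) / (t - a) *)
Fixpoint pow_sub_quot (a t : R) (m : nat) : R :=
  match m with O => 0 | S m' => t ^ m' + a * pow_sub_quot a t m' end.

Lemma pow_sub_factor a t m : t ^ m - a ^ m = (t - a) * pow_sub_quot a t m.
Proof.
  induction m as [|m IH]; simpl; [ring|].
  replace ((t - a) * (t ^ m + a * pow_sub_quot a t m))
    with ((t - a) * t ^ m + a * ((t - a) * pow_sub_quot a t m)) by ring.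
  rewrite <- IH; ring.
Qed.

Lemma in_PN_pow_sub_quot a n m : (m <= S n)%nat -> in_PN n (fun t => pow_sub_quot a t m).
Proof.
  induction m as [|m IH]; intros Hm; simpl; [apply in_PN_const|].
  apply (in_PN_ext n (fun t => 1 * t ^ m + a * pow_sub_quot a t m)); [intros; ring|].
  apply in_PN_lincomb; [apply in_PN_pow | apply IH]; lia.
Qed.

Lemma in_PN_factor_root n p a : in_PN (S n) p -> p a = 0 ->
  exists q, in_PN n q /\ forall t, p t = (t - a) * q t.
Proof.
  intros [c H] Ha.
  exists (fun t => sum_f_R0 (fun m => c m * pow_sub_quot a t m) (S n)); split.
  - apply in_PN_sum; intros m Hm.
    apply (in_PN_ext n (fun t => 0 * 0 + c m * pow_sub_quot a t m)); [intros; ring|].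
    apply in_PN_lincomb; [apply in_PN_const | apply in_PN_pow_sub_quot; lia].
  - intro t. replace (p t) with (p t - p a) by (rewrite Ha; ring).
    rewrite !H, <- minus_sum, scal_sum; apply sum_eq; intros m _.
    replace (c m * t ^ m - c m * a ^ m) with (c m * (t ^ m - a ^ m)) by ring.
    rewrite pow_sub_factor; ring.
Qed.

Lemma in_PN_eq0_of_roots n p (z : nat -> R) : in_PN n p ->
  (forall i, (i <= n)%nat -> p (z i) = 0) ->
  (forall i j, (i <= n)%nat -> (j <= n)%nat -> i <> j -> z i <> z j) ->
  forall t, p t = 0.
Proof.
  revert p; induction n as [|n IH]; intros p Hp Hz Hd t.
  - destruct Hp as [c H]. specialize (Hz 0%nat (le_n 0)).
    rewrite H in Hz |- *; simpl in *; lra.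
  - destruct (in_PN_factor_root n p (z (S n)) Hp (Hz (S n) (le_n _))) as [q [Hq Hpq]].
    assert (Hq0 : forall t, q t = 0).
    { apply IH; [exact Hq | | intros; apply Hd; lia].
      intros i Hi. specialize (Hz i ltac:(lia)). rewrite Hpq in Hz.
      apply Rmult_integral in Hz as [Hz|Hz]; [|exact Hz].
      exfalso; apply (Hd i (S n)); lia || lra. }
    rewrite Hpq, Hq0; ring.
Qed.

Lemma prod_f_R0_eq1 f n : (forall m, (m <= n)%nat -> f m = 1) -> prod_f_R0 f n = 1.
Proof.
  induction n as [|n IH]; intros H; simpl; [apply H; lia|].
  rewrite IH, H; [ring | lia | intros; apply H; lia].
Qed.

Lemma prod_f_R0_eq0 f n i : (i <= n)%nat -> f i = 0 -> prod_f_R0 f n = 0.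
Proof.
  induction n as [|n IH]; intros Hi H; simpl.
  - replace i with 0%nat in H by lia; exact H.
  - destruct (Nat.eq_dec i (S n)) as [->|]; [rewrite H; ring|].
    rewrite IH; [ring | lia | exact H].
Qed.

Lemma sum_f_R0_kdelta c n i : (i <= n)%nat -> sum_f_R0 (fun l => c l * kdelta i l) n = c i.
Proof.
  unfold kdelta; induction n as [|n IH]; intros Hi; simpl.
  - replace i with 0%nat by lia; simpl; ring.
  - destruct (Nat.eq_dec i (S n)) as [->|].
    + rewrite sum_eq_R0; [ring|].
      intros m Hm; destruct (Nat.eq_dec (S n) m); [lia|ring].
    + rewrite IH by lia; ring.
Qed.

Lemma sum_f_R0_drop_tail F m n : (m <= n)%nat ->
  (forall l, (m < l <= n)%nat -> F l = 0) -> sum_f_R0 F n = sum_f_R0 F m.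
Proof.
  induction n as [|n IH]; intros Hmn H.
  - replace m with 0%nat by lia; reflexivity.
  - destruct (Nat.eq_dec m (S n)) as [->|]; [reflexivity|].
    simpl; rewrite (H (S n)), IH by (lia || intros; apply H; lia); ring.
Qed.

Lemma sum_f_1_S F n : sum_f 1 (S n) F = sum_f_R0 (fun l => F (S l)) n.
Proof.
  unfold sum_f; replace (S n - 1)%nat with n by lia.
  apply sum_eq; intros; rewrite Nat.add_1_r; reflexivity.
Qed.

Section Lagrange.

Variables (x : nat -> R) (N : nat).

Definition lagrange_factor (j l : nat) (t : R) : R :=
  if Nat.eq_dec l j then 1 else (t - x l) / (x j - x l).

Lemma lagrange_factor_same j t : lagrange_factor j j t = 1.
Proof. unfold lagrange_factor; destruct (Nat.eq_dec j j); congruence. Qed.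

Lemma lagrange_factor_other j l t : l <> j -> lagrange_factor j l t = (t - x l) / (x j - x l).
Proof. unfold lagrange_factor; destruct (Nat.eq_dec l j); congruence. Qed.

(* The factor l = j is 1, so the partial product up to m has degree m once it has been passed. *)
Lemma lagrange_partial_PN j m :
  in_PN (if Nat.leb j m then m else S m) (fun t => prod_f_R0 (fun l => lagrange_factor j l t) m).
Proof.
  induction m as [|m IH]; simpl prod_f_R0.
  - destruct (Nat.eq_dec 0 j) as [<-|Hj].
    + apply (in_PN_ext 0 (fun _ => 1)); [intro; now rewrite lagrange_factor_same | apply in_PN_const].
    + replace (Nat.leb j 0) with false by (symmetry; apply Nat.leb_gt; lia).
      apply (in_PN_ext 1 (fun t => 1 * ((t - x 0%nat) / (x j - x 0%nat)))).
      * intro; rewrite lagrange_factor_other by auto; ring.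
      * apply in_PN_mul_linear, in_PN_const.
  - destruct (Nat.eq_dec (S m) j) as [<-|Hj].
    + rewrite Nat.leb_refl; rewrite (proj2 (Nat.leb_gt (S m) m)) in IH by lia.
      apply (in_PN_ext (S m) (fun t => prod_f_R0 (fun l => lagrange_factor (S m) l t) m)).
      * intro; rewrite lagrange_factor_same; ring.
      * exact IH.
    + apply (in_PN_ext _ (fun t => prod_f_R0 (fun l => lagrange_factor j l t) m
                                     * ((t - x (S m)) / (x j - x (S m))))).
      * intro; rewrite lagrange_factor_other by auto; reflexivity.
      * destruct (Nat.leb_spec j m), (Nat.leb_spec j (S m)); try lia;
          apply in_PN_mul_linear, IH.
Qed.

Lemma lagrange_PN j : (j <= N)%nat -> in_PN N (lagrange x N j).
Proof.
  intro Hj; pose proof (lagrange_partial_PN j N) as H.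
  rewrite (proj2 (Nat.leb_le j N) Hj) in H; exact H.
Qed.

Hypothesis nodes_distinct :
  forall a b, (a <= N)%nat -> (b <= N)%nat -> a <> b -> x a <> x b.

Lemma lagrange_node i j : (i <= N)%nat -> (j <= N)%nat -> lagrange x N j (x i) = kdelta i j.
Proof.
  intros Hi Hj; unfold kdelta; destruct (Nat.eq_dec i j) as [<-|Hij].
  - apply prod_f_R0_eq1; intros m Hm; fold (lagrange_factor i m (x i)).
    destruct (Nat.eq_dec m i) as [->|Hm']; [apply lagrange_factor_same|].
    rewrite lagrange_factor_other by exact Hm'.
    field; intro E; apply (nodes_distinct i m); auto; lra.
  - apply (prod_f_R0_eq0 _ _ i Hi); fold (lagrange_factor j i (x i)).
    rewrite lagrange_factor_other by exact Hij; unfold Rdiv; ring.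
Qed.

Lemma lagrange_interpolation p : in_PN N p ->
  forall t, p t = sum_f_R0 (fun l => p (x l) * lagrange x N l t) N.
Proof.
  intros Hp t.
  enough (p t - sum_f_R0 (fun l => p (x l) * lagrange x N l t) N = 0) by lra.
  apply (in_PN_eq0_of_roots N (fun t => p t - sum_f_R0 (fun l => p (x l) * lagrange x N l t) N) x);
    [| | exact nodes_distinct].
  - apply (in_PN_ext N (fun t => 1 * p t + -1 * sum_f_R0 (fun l => p (x l) * lagrange x N l t) N));
      [intros; ring|].
    apply in_PN_lincomb; [exact Hp|].
    apply in_PN_sum; intros m Hm.
    apply (in_PN_ext N (fun t => 0 * 0 + p (x m) * lagrange x N m t)); [intros; ring|].
    apply in_PN_lincomb; [apply in_PN_const | apply lagrange_PN; exact Hm].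
  - intros i Hi.
    rewrite (sum_eq _ (fun l => p (x l) * kdelta i l)), sum_f_R0_kdelta by
      (auto; intros; rewrite lagrange_node; auto).
    ring.
Qed.

Lemma lagrange_interpolation_interior p M : (1 <= M <= N)%nat -> in_PN N p ->
  p (x 0%nat) = 0 -> (forall l, (M < l <= N)%nat -> p (x l) = 0) ->
  forall t, p t = sum_f 1 M (fun l => p (x l) * lagrange x N l t).
Proof.
  intros HM Hp Hfirst Htail t.
  rewrite (lagrange_interpolation p Hp t), (sum_f_R0_drop_tail _ M N)
    by (lia || intros l Hl; rewrite Htail by exact Hl; ring).
  destruct M as [|M]; [lia|].
  rewrite decomp_sum, Hfirst, Rmult_0_l, Rplus_0_l, sum_f_1_S by lia; reflexivity.
Qed.

End Lagrange.

Lemma eq_of_common_approx l1 l2 :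
  (forall eps, 0 < eps -> exists I, Rabs (I - l1) < eps /\ Rabs (I - l2) < eps) -> l1 = l2.
Proof.
  intros H; apply cond_eq; intros eps He.
  destruct (H (eps / 2)) as [I [H1 H2]]; [lra|].
  replace (l1 - l2) with ((l1 - I) + (I - l2)) by ring.
  eapply Rle_lt_trans; [apply Rabs_triang|].
  rewrite Rabs_minus_sym; lra.
Qed.

Lemma riemann_int_unique f a b I1 I2 : riemann_int f a b I1 -> riemann_int f a b I2 -> I1 = I2.
Proof. intros [p1 <-] [p2 <-]; apply RiemannInt_P5. Qed.

Lemma Gamma_unique rho G1 G2 : is_Gamma rho G1 -> is_Gamma rho G2 -> G1 = G2.
Proof.
  intros H1 H2; apply eq_of_common_approx; intros eps He.
  destruct (H1 eps He) as [d1 [M1 [Hd1 P1]]], (H2 eps He) as [d2 [M2 [Hd2 P2]]].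
  set (a := Rmin d1 d2 / 2); set (b := Rmax M1 M2 + 1).
  assert (0 < a < d1 /\ a < d2).
  { pose proof (Rmin_l d1 d2); pose proof (Rmin_r d1 d2);
      pose proof (Rmin_glb_lt d1 d2 0 Hd1 Hd2); unfold a; lra. }
  assert (M1 < b /\ M2 < b).
  { pose proof (Rmax_l M1 M2); pose proof (Rmax_r M1 M2); unfold b; lra. }
  destruct (P1 a b) as [I1 [R1 A1]]; [lra | lra |].
  destruct (P2 a b) as [I2 [R2 A2]]; [lra | lra |].
  rewrite <- (riemann_int_unique _ _ _ _ _ R1 R2) in A2; exists I1; split; assumption.
Qed.

Lemma frac_int_unique rho g x v1 v2 : -1 < x ->
  frac_int rho g x v1 -> frac_int rho g x v2 -> v1 = v2.
Proof.
  intros Hx [G1 [L1 [HG1 [-> P1]]]] [G2 [L2 [HG2 [-> P2]]]].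
  rewrite (Gamma_unique _ _ _ HG1 HG2); f_equal.
  apply eq_of_common_approx; intros eps He.
  destruct (P1 eps He) as [d1 [Hd1 Q1]], (P2 eps He) as [d2 [Hd2 Q2]].
  set (b := Rmax (-1) (x - Rmin d1 d2 / 2)).
  assert (-1 <= b /\ x - Rmin d1 d2 / 2 <= b) by (split; [apply Rmax_l | apply Rmax_r]).
  assert (b < x).
  { apply Rmax_lub_lt; [lra|]. pose proof (Rmin_glb_lt d1 d2 0 Hd1 Hd2); lra. }
  pose proof (Rmin_l d1 d2); pose proof (Rmin_r d1 d2).
  destruct (Q1 b) as [I1 [R1 A1]]; [lra | lra |].
  destruct (Q2 b) as [I2 [R2 A2]]; [lra | lra |].
  rewrite <- (riemann_int_unique _ _ _ _ _ R1 R2) in A2; exists I1; split; assumption.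
Qed.

Lemma frac_int_lincomb rho g1 g2 x v1 v2 c :
  frac_int rho g1 x v1 -> frac_int rho g2 x v2 ->
  frac_int rho (fun y => g1 y + c * g2 y) x (v1 + c * v2).
Proof.
  intros [G1 [L1 [HG1 [-> P1]]]] [G2 [L2 [HG2 [-> P2]]]].
  rewrite <- (Gamma_unique _ _ _ HG1 HG2).
  exists G1, (L1 + c * L2); split; [exact HG1 | split; [unfold Rdiv; ring |]].
  intros eps He.
  pose proof (Rabs_pos c) as Hc.
  set (e2 := eps / (2 * (Rabs c + 1))).
  assert (He2 : 0 < e2) by (unfold e2; apply Rdiv_lt_0_compat; lra).
  assert (Hce2 : Rabs c * e2 < eps / 2).
  { assert ((Rabs c + 1) * e2 = eps / 2) by (unfold e2; field; lra); nra. }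
  destruct (P1 (eps / 2)) as [d1 [Hd1 Q1]]; [lra|].
  destruct (P2 e2 He2) as [d2 [Hd2 Q2]].
  exists (Rmin d1 d2); split; [apply Rmin_glb_lt; assumption|].
  intros b Hb Hbx; pose proof (Rmin_l d1 d2); pose proof (Rmin_r d1 d2).
  destruct (Q1 b Hb) as [I1 [[p1 <-] A1]]; [lra|].
  destruct (Q2 b Hb) as [I2 [[p2 <-] A2]]; [lra|].
  exists (RiemannInt p1 + c * RiemannInt p2); split.
  - replace (fun y => Rpower (x - y) (rho - 1) * (g1 y + c * g2 y))
      with (fun y => Rpower (x - y) (rho - 1) * g1 y + c * (Rpower (x - y) (rho - 1) * g2 y))
      by (apply functional_extensionality; intro; ring).
    exists (RiemannInt_P10 c p1 p2); apply RiemannInt_P13.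
  - replace (RiemannInt p1 + c * RiemannInt p2 - (L1 + c * L2))
      with ((RiemannInt p1 - L1) + c * (RiemannInt p2 - L2)) by ring.
    eapply Rle_lt_trans; [apply Rabs_triang|]; rewrite Rabs_mult.
    assert (Rabs c * Rabs (RiemannInt p2 - L2) <= Rabs c * e2)
      by (apply Rmult_le_compat_l; lra).
    lra.
Qed.

Lemma nderiv_unique k u g1 g2 : is_nderiv k u g1 -> is_nderiv k u g2 -> g1 = g2.
Proof.
  revert u; induction k as [|k IH]; simpl; intros u H1 H2.
  - apply functional_extensionality; intro y; rewrite H1, H2; reflexivity.
  - destruct H1 as [u1 [D1 N1]], H2 as [u2 [D2 N2]].
    assert (u1 = u2) as <-.
    { apply functional_extensionality; intro t; eapply uniqueness_limite; [apply D1 | apply D2]. }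
    exact (IH u1 N1 N2).
Qed.

Lemma nderiv_lincomb k u w g h c : is_nderiv k u g -> is_nderiv k w h ->
  is_nderiv k (fun t => u t + c * w t) (fun t => g t + c * h t).
Proof.
  revert u w g h; induction k as [|k IH]; simpl; intros u w g h H1 H2.
  - intro y; rewrite H1, H2; reflexivity.
  - destruct H1 as [u1 [D1 N1]], H2 as [w1 [D2 N2]].
    exists (fun t => u1 t + c * w1 t); split; [|apply IH; assumption].
    intro y; exact (derivable_pt_lim_plus _ _ y _ _ (D1 y) (derivable_pt_lim_scal _ c y _ (D2 y))).
Qed.

Section Caputo.

Variables (mu : R) (k : nat).

Lemma caputo_unique u x v1 v2 : -1 < x -> caputo mu k u x v1 -> caputo mu k u x v2 -> v1 = v2.
Proof.
  intros Hx [g1 [N1 F1]] [g2 [N2 F2]].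
  rewrite (nderiv_unique _ _ _ _ N1 N2) in F1.
  exact (frac_int_unique _ _ _ _ _ Hx F1 F2).
Qed.

Lemma caputo_ext u w x v : (forall t, u t = w t) -> caputo mu k u x v -> caputo mu k w x v.
Proof. intros E; replace w with u by (apply functional_extensionality; exact E); auto. Qed.

Lemma caputo_lincomb u w x v1 v2 c : caputo mu k u x v1 -> caputo mu k w x v2 ->
  caputo mu k (fun t => u t + c * w t) x (v1 + c * v2).
Proof.
  intros [g1 [N1 F1]] [g2 [N2 F2]].
  exists (fun t => g1 t + c * g2 t); split;
    [apply nderiv_lincomb | apply frac_int_lincomb]; assumption.
Qed.

Lemma caputo_scal u x v c : caputo mu k u x v -> caputo mu k (fun t => c * u t) x (c * v).
Proof.
  intros H; pose proof (caputo_lincomb _ _ _ _ _ (c - 1) H H) as Hc.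
  replace (c * v) with (v + (c - 1) * v) by ring.
  apply (caputo_ext (fun t => u t + (c - 1) * u t)); [intros; ring | exact Hc].
Qed.

Lemma caputo_sum x n (h : nat -> R -> R) (c v : nat -> R) :
  (forall l, (l <= n)%nat -> caputo mu k (h l) x (v l)) ->
  caputo mu k (fun t => sum_f_R0 (fun l => c l * h l t) n) x (sum_f_R0 (fun l => c l * v l) n).
Proof.
  induction n as [|n IH]; intros H; [apply caputo_scal, H; lia|].
  replace (sum_f_R0 (fun l => c l * v l) (S n))
    with (sum_f_R0 (fun l => c l * v l) n + 1 * (c (S n) * v (S n))) by (simpl; ring).
  apply (caputo_ext (fun t => sum_f_R0 (fun l => c l * h l t) n + 1 * (c (S n) * h (S n) t)));
    [intros; simpl; ring|].
  apply caputo_lincomb; [apply IH; intros; apply H; lia | apply caputo_scal, H; lia].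
Qed.

End Caputo.

Module SquareInverse.
Import all_boot all_algebra Rstruct GRing.Theory.
Local Open Scope ring_scope.

Lemma sum_f_R0_big (F : nat -> R) n : sum_f_R0 F n = \sum_(l < n.+1) F l.
Proof. by elim: n => [|n IH]; rewrite ?big_ord1 // big_ord_recr /= -IH. Qed.

Lemma kdelta_natr i j : kdelta i j = (i == j)%:R.
Proof. by rewrite /kdelta; case: Nat.eq_dec => [->|ne]; rewrite ?eqxx //; case: eqP. Qed.

Lemma sum_f_R0_inverse_comm (n : nat) (f g : nat -> nat -> R) :
  (forall i j, (i <= n)%coq_nat -> (j <= n)%coq_nat ->
     sum_f_R0 (fun l => f i l * g l j) n = kdelta i j) ->
  forall i j, (i <= n)%coq_nat -> (j <= n)%coq_nat ->
     sum_f_R0 (fun l => g i l * f l j) n = kdelta i j.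
Proof.
move=> fg i j /leP i_le /leP j_le.
pose mx (h : nat -> nat -> R) : 'M[R]_n.+1 := \matrix_(a, b) h a b.
have mul_mx h1 h2 (a b : 'I_n.+1) :
    (mx h1 *m mx h2) a b = sum_f_R0 (fun l => h1 a l * h2 l b) n.
  by rewrite !mxE sum_f_R0_big; apply: eq_bigr => l _; rewrite !mxE.
have /matrixP/(_ (inord i) (inord j)) : mx g *m mx f = 1%:M.
  apply: mulmx1C; apply/matrixP => a b.
  by rewrite mul_mx fg ?mxE -?kdelta_natr //; apply/leP; rewrite -ltnS ltn_ord.
by rewrite mul_mx mxE -(inj_eq val_inj) /= !inordK ?ltnS // kdelta_natr.
Qed.

End SquareInverse.

Lemma kdelta_S i j : kdelta (S i) (S j) = kdelta i j.
Proof. unfold kdelta; destruct (Nat.eq_dec (S i) (S j)), (Nat.eq_dec i j); lia || reflexivity. Qed.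

Lemma sum_f_1_inverse_comm n (f g : nat -> nat -> R) :
  (forall i j, (1 <= i <= n)%nat -> (1 <= j <= n)%nat ->
     sum_f 1 n (fun l => f i l * g l j) = kdelta i j) ->
  forall i j, (1 <= i <= n)%nat -> (1 <= j <= n)%nat ->
     sum_f 1 n (fun l => g i l * f l j) = kdelta i j.
Proof.
  intros Hfg i j Hi Hj.
  destruct n as [|n], i as [|i], j as [|j]; try lia.
  rewrite sum_f_1_S, kdelta_S.
  apply (SquareInverse.sum_f_R0_inverse_comm n (fun a b => f (S a) (S b)) (fun a b => g (S a) (S b)));
    try lia.
  intros a b Ha Hb; specialize (Hfg (S a) (S b) ltac:(lia) ltac:(lia)).
  rewrite sum_f_1_S, kdelta_S in Hfg; exact Hfg.
Qed.

Lemma strictly_increasing_lt (x : nat -> R) N : (forall i, (i < N)%nat -> x i < x (S i)) ->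
  forall i j, (i < j <= N)%nat -> x i < x j.
Proof.
  intros Hx i j; induction j as [|j IH]; intros Hij; [lia|].
  destruct (Nat.eq_dec i j) as [->|]; [apply Hx; lia|].
  apply (Rlt_trans _ (x j)); [apply IH | apply Hx]; lia.
Qed.

Lemma strictly_increasing_injective (x : nat -> R) N : (forall i, (i < N)%nat -> x i < x (S i)) ->
  forall a b, (a <= N)%nat -> (b <= N)%nat -> a <> b -> x a <> x b.
Proof.
  intros Hx a b Ha Hb Hab.
  destruct (Nat.lt_total a b) as [Hlt|[Heq|Hgt]]; [| contradiction |].
  - pose proof (strictly_increasing_lt x N Hx a b (conj Hlt Hb)); lra.
  - pose proof (strictly_increasing_lt x N Hx b a (conj Hgt Ha)); lra.
Qed.

Theorem theorem4p1
  (N : nat) (alpha beta : R) (x : nat -> R) (k : nat) (mu : R)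
  (Q : nat -> R -> R) (D : nat -> nat -> R) :
  (2 <= N)%nat -> -1 < alpha -> -1 < beta ->
  (forall i, (i < N)%nat -> x i < x (S i)) ->
  (forall t, (exists d, derivable_pt_lim (jacobiP N alpha beta) t d
                         /\ (1 - t ^ 2) * d = 0)
             <-> exists i, (i <= N)%nat /\ x i = t) ->
  x 0%nat = -1 -> x N = 1 ->
  (k = 1 \/ k = 2)%nat -> INR k - 1 < mu < INR k ->
  (forall j, (1 <= j <= N + 1 - k)%nat ->
     in_PN N (Q j) /\
     (forall i, (1 <= i <= N + 1 - k)%nat -> caputo mu k (Q j) (x i) (kdelta i j)) /\
     Q j (-1) = 0 /\
     (k = 2%nat -> Q j 1 = 0)) ->
  (forall i j, (1 <= i <= N + 1 - k)%nat -> (1 <= j <= N + 1 - k)%nat ->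
     caputo mu k (lagrange x N j) (x i) (D i j)) ->
  forall i j, (1 <= i <= N + 1 - k)%nat -> (1 <= j <= N + 1 - k)%nat ->
    sum_f 1 (N + 1 - k) (fun l => Q l (x i) * D l j) = kdelta i j /\
    sum_f 1 (N + 1 - k) (fun l => D i l * Q j (x l)) = kdelta i j.
Proof.
  intros HN _ _ Hx _ Hx0 HxN Hk _ HQ HD.
  set (M := (N + 1 - k)%nat).
  assert (Hinterp : forall j, (1 <= j <= M)%nat ->
            forall t, Q j t = sum_f 1 M (fun l => Q j (x l) * lagrange x N l t)).
  { intros j Hj; destruct (HQ j Hj) as [HP [_ [Hleft Hright]]].
    apply lagrange_interpolation_interior;
      [exact (strictly_increasing_injective x N Hx) | unfold M; lia | exact HP | congruence |].
    intros l Hl; unfold M in Hl.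
    destruct Hk as [-> | ->]; [lia|].
    replace l with N by lia; rewrite HxN; apply Hright; reflexivity. }
  assert (HDQ : forall i j, (1 <= i <= M)%nat -> (1 <= j <= M)%nat ->
            sum_f 1 M (fun l => D i l * Q j (x l)) = kdelta i j).
  { intros i j Hi Hj; apply (caputo_unique mu k (Q j) (x i)).
    - rewrite <- Hx0; apply (strictly_increasing_lt x N Hx); unfold M in Hi; lia.
    - apply (caputo_ext _ _ (fun t => sum_f 1 M (fun l => Q j (x l) * lagrange x N l t)));
        [intro t; symmetry; apply Hinterp, Hj|].
      replace (sum_f 1 M (fun l => D i l * Q j (x l)))
        with (sum_f 1 M (fun l => Q j (x l) * D i l))
        by (apply sum_eq; intros; apply Rmult_comm).
      apply caputo_sum; intros l Hl; apply HD; [exact Hi | unfold M in *; lia].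
    - apply HQ; assumption. }
  intros i j Hi Hj; split.
  - apply (sum_f_1_inverse_comm M D (fun l j => Q j (x l))); assumption.
  - apply HDQ; assumption.
Qed.
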